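(* Let $\Omega$ be an infinite set and $A_i\subseteq\Omega$ for $i\in\mathbb{N}$. Define: $\mathcal{F}$ the set of nonempty finite subsets of $\mathbb{N}$, $\tilde{\mathcal{F}}:=\mathcal{F}\cup\{\emptyset\}$, and for $j\in\mathbb{Z}_+$, $\mathcal{F}_j$ the set of subsets of $\mathbb{N}$ of cardinality $j$; $B_\emptyset:=\Omega\setminus\bigcup_{i\in\mathbb{N}}A_i$; $B_\infty:=\limsup A_i=\bigcap_{i\in\mathbb{N}}\bigcup_{j\ge i}A_j$; for $U\in\mathcal{F}$, $A_U:=\bigcap_{i\in U}A_i$, $B_U:=A_U\setminus\bigcup_{i\in\mathbb{N}\setminus U}A_{U\cup\{i\}}$ (the points lying in $A_i$ exactly for $i\in U$), and $A'_U:=A_U\setminus B_\infty$. Then: (1) the sets $B_\infty$ and $B_U$, $U\in\tilde{\mathcal{F}}$, form a countable partition of $\Omega$; (2) $\bigcup_{i\in\mathbb{N}}A_i=B_\infty\cup\bigcup_{U\in\mathcal{F}}B_U$; (3) $A_U=A'_U\cup(A_U\cap B_\infty)$ for $U\in\mathcal{F}$. Assume in addition that $(\Omega,\Sigma,\Pr)$ is a probability space and $A_i\in\Sigma$ for all $i$, and let $S_k:=\sum_{1\le i_1<\cdots<i_k}\Pr(A_{i_1}\cap\cdots\cap A_{i_k})\in[0,\infty]$ for $k\in\mathbb{N}$ and $T_j:=\sum_{U\in\mathcal{F}_j}\Pr(B_U)$ for $j\in\mathbb{Z}_+$. Then: (4) if $S_k<\infty$ for some $k\in\mathbb{N}$,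 then $\Pr(B_\infty)=0$; (5) $\sum_{j\in\mathbb{Z}_+}T_j\le1$, with equality if and only if $\Pr(B_\infty)=0$; (6) if $\Pr(B_\infty)=0$, then $S_k=\sum_{j\in\mathbb{Z}_+}\binom{j+k}{k}T_{j+k}\in[0,\infty]$ for each $k\in\mathbb{N}$ (in the generalized sense: $S_k=\infty$ iff the series diverges); (7) if $S_l<\infty$ for some $l\in\mathbb{N}$, then $S_k<\infty$ for every positive integer $k<l$; and if furthermore $d,r\in\mathbb{Z}_+$ and $k\in\mathbb{N}$ satisfy $2d+k+1\in[1,l]$ and $2r+k\in[1,l]$, then $$\sum_{j=0}^{2d+1}(-1)^j\binom{j+k-1}{k-1}S_{j+k}\le\Pr\Big(\bigcup_{i_1<\cdots<i_k}(A_{i_1}\cap\cdots\cap A_{i_k})\Big)\le\sum_{j=0}^{2r}(-1)^j\binom{j+k-1}{k-1}S_{j+k}.$$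
   Context: $\mathbb{N}$ denotes the positive integers and $\mathbb{Z}_+$ the nonnegative integers; $\mathcal{F}_0=\{\emptyset\}$ and $B_\emptyset$ is as defined. *)

From HB Require Import structures.
From mathcomp Require Import all_boot all_order all_algebra.
From mathcomp Require Import finmap.
From mathcomp Require Import all_classical all_reals all_analysis.
Set Implicit Arguments. Unset Strict Implicit. Unset Printing Implicit Defensive.
Import Order.TTheory GRing.Theory Num.Theory.
Local Open Scope classical_set_scope.

(* Indices: the paper's ℕ = {1,2,...} is relabelled as nat = {0,1,2,...}
   (i |-> i-1); finite subsets of the index set are {fset nat}. *)

Section Defs.
Context {Omega : Type} (A : nat -> set Omega).

Definition Bempty : set Omega := ~` \bigcup_i A i.

Definition Binf : set Omega := \bigcap_i \bigcup_(j in [set j | (i <= j)%N]) A j.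

Definition AU (U : {fset nat}) : set Omega := \bigcap_(i in [set i | i \in U]) A i.

Definition BU (U : {fset nat}) : set Omega :=
  if U == fset0 then Bempty
  else AU U `\` \bigcup_(i in [set i | i \notin U]) AU (fsetU U [fset i]%fset).

Definition AU' (U : {fset nat}) : set Omega := AU U `\` Binf.

Definition Bfam (o : option {fset nat}) : set Omega :=
  match o with None => Binf | Some U => BU U end.
End Defs.

Section Prob.
Context {d : measure_display} {T : measurableType d} {R : realType}
  (P : probability T R) (A : nat -> set T).
Local Open Scope ereal_scope.

Definition Ssum (k : nat) : \bar R :=
  esum [set U : {fset nat} | #|` U| = k] (fun U => P (AU A U)).

Definition Tsum (j : nat) : \bar R :=
  esum [set U : {fset nat} | #|` U| = j] (fun U => P (BU A U)).
End Prob.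

From HB Require Import structures.
From mathcomp Require Import all_boot all_order all_algebra.
From mathcomp Require Import finmap.
From mathcomp Require Import all_classical all_reals all_analysis.
From mathcomp Require Import zify ring lra.
Import Order.TTheory GRing.Theory Num.Theory.

(* Outside [B_inf] a point lies in only finitely many [A_i], hence in exactly
   one [B_U], namely for [U] the set of indices it hits.  So [A_U \ B_inf] is
   the disjoint union of the [B_V] with [U <= V], and a point of [B_V] is
   counted [C(|V|, k)] times in [S_k]: when [Pr(B_inf) = 0] this gives
   [S_k = sum_V C(|V|, k) Pr(B_V)].  A point of [B_inf] lies in [A_U] for
   k-sets [U] beyond any finite family, so [Pr(B_inf)] is added to every finite
   partial sum of [S_k], which forces [Pr(B_inf) = 0] when [S_k] is finite.
   The Bonferroni inequalities then reduce to a point lying in exactly [m] of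
   the [A_i]: the partial sums of [sum_j (-1)^j C(j+k-1, k-1) C(m, j+k)]
   alternate around [m >= k], the remainder telescoping by the hockey-stick
   identity. *)

Set Implicit Arguments. Unset Strict Implicit. Unset Printing Implicit Defensive.

Lemma sum_bin_nat m j : \sum_(0 <= i < m) 'C(i, j) = 'C(m, j.+1).
Proof.
elim: m => [|m IH]; first by rewrite big_geq.
by rewrite big_nat_recr //= IH binS addnC.
Qed.

Lemma mul_bin_bin n a b : 'C(n, a) * 'C(n - a, b) = 'C(n, a + b) * 'C(a + b, a).
Proof.
have [abn|nab] := leqP (a + b) n; last first.
  rewrite (bin_small nab) mul0n.
  have [an|na] := leqP a n; last by rewrite (bin_small na).
  by rewrite (@bin_small (n - a) b) ?muln0 //; lia.
have an : a <= n by lia.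
have bna : b <= n - a by lia.
have fact_pos : 0 < a`! * b`! * (n - a - b)`! by rewrite !muln_gt0 !fact_gt0.
have nab : n - a - b = n - (a + b) by lia.
apply/eqP; rewrite -(eqn_pmul2r fact_pos); apply/eqP.
transitivity n`!.
  by rewrite -(bin_fact an) -(bin_fact bna) nab !mulnA; ring.
rewrite -(bin_fact abn) -(bin_fact (leq_addr b a)) nab.
have -> : a + b - a = b by lia.
by rewrite !mulnA; ring.
Qed.

Lemma leq_bin_mul m k l : k <= l -> 'C(m, k) <= 'C(l, k) * ('C(m, l) + 1).
Proof.
move=> kl; have [lm|ml] := leqP l m.
  have := mul_bin_bin m k (l - k); have -> : k + (l - k) = l by lia.
  move=> mul_bin; have bin_pos : 0 < 'C(m - k, l - k) by rewrite bin_gt0; lia.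
  apply: (@leq_trans ('C(m, k) * 'C(m - k, l - k))); first by rewrite leq_pmulr.
  by rewrite mul_bin mulnC leq_mul2l leq_addr orbT.
apply: (@leq_trans 'C(l, k)); first by apply: leq_bin2l; lia.
by rewrite leq_pmulr // addn1.
Qed.

Section Bonferroni_nat.
Variable k : nat.
Hypothesis k_gt0 : 0 < k.

Definition bonf_coef j := 'C(j + k - 1, k - 1).

(* The weight, in the terms [j < n] with [Q j] of the Bonferroni sum, of a point
   lying in exactly [m] of the [A_i]. *)
Definition bonf_sum (Q : pred nat) n m :=
  \sum_(0 <= j < n | Q j) bonf_coef j * 'C(m, j + k).

Definition bonf_rem t m := \sum_(0 <= i < m | k <= i) 'C(i, k - 1) * 'C(i - k, t).

Lemma bonf_sumS Q n m :
  bonf_sum Q n.+1 m = bonf_sum Q n m + Q n * (bonf_coef n * 'C(m, n + k)).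
Proof.
rewrite /bonf_sum big_mkcond big_nat_recr //= -big_mkcond.
by case: (Q n); rewrite ?addn0 ?mul1n.
Qed.

Lemma bonf_rem0 m : 'C(m, k) = (k <= m) + bonf_rem 0 m.
Proof.
elim: m => [|m IH].
  by rewrite /bonf_rem big_geq // addn0 bin0n; case: (k) k_gt0.
rewrite /bonf_rem big_mkcond big_nat_recr //= -big_mkcond /= -/(bonf_rem 0 m).
have -> : k = (k - 1).+1 by lia.
rewrite binS; have -> : (k - 1).+1 = k by lia.
rewrite IH bin0 muln1.
have [km|km] := leqP k m; first by rewrite (leq_trans km (leqnSn _)); lia.
have [->|ne] := eqVneq k m.+1.
  by rewrite leqnn (_ : m.+1 - 1 = m) ?binn /= ?addn0 1?addnC //; lia.
rewrite bin_small; last by lia.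
have -> : (k <= m.+1) = false by apply/negbTE; rewrite -ltnNge ltn_neqAle eq_sym ne.
by rewrite /= !addn0.
Qed.

Lemma bonf_remSD t m : bonf_rem t m + bonf_rem t.+1 m = bonf_coef t.+1 * 'C(m, t.+1 + k).
Proof.
rewrite /bonf_rem -big_split /=.
rewrite (eq_bigr (fun i => 'C(t + k, k - 1) * 'C(i, t + k))); last first.
  move=> i ki; rewrite -mulnDr addnC -binS.
  have -> : (i - k).+1 = i - (k - 1) by lia.
  rewrite mul_bin_bin; have -> : k - 1 + t.+1 = t + k by lia.
  by rewrite mulnC.
rewrite -big_distrr /= /bonf_coef; have -> : t.+1 + k - 1 = t + k by lia.
congr (_ * _).
rewrite addSn -sum_bin_nat [RHS](bigID (fun i => k <= i)) /=.
rewrite [X in _ = _ + X]big1 ?addn0 // => i; rewrite -ltnNge => ik.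
by rewrite bin_small //; lia.
Qed.

(* The alternating partial sum minus [k <= m] is (-1)^t bonf_rem t m. *)
Lemma bonf_sum_rem t m :
  if odd t then bonf_sum (predC odd) t.+1 m + bonf_rem t m = (k <= m) + bonf_sum odd t.+1 m
  else bonf_sum (predC odd) t.+1 m = (k <= m) + bonf_sum odd t.+1 m + bonf_rem t m.
Proof.
elim: t => [|t IH].
  rewrite /= !bonf_sumS /bonf_sum !big_geq //= /bonf_coef add0n binn mul1n bonf_rem0.
  by rewrite mul1n mul0n !addn0.
rewrite (bonf_sumS (predC odd)) (bonf_sumS odd) /=; have := bonf_remSD t m.
by case: (odd t) IH => /= IH; lia.
Qed.

Lemma bonferroni_nat_upper r m :
  (k <= m) + bonf_sum odd (2 * r).+1 m <= bonf_sum (predC odd) (2 * r).+1 m.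
Proof. by have := bonf_sum_rem (2 * r) m; rewrite oddM /= => ->; lia. Qed.

Lemma bonferroni_nat_lower d m :
  bonf_sum (predC odd) (2 * d + 1).+1 m <= (k <= m) + bonf_sum odd (2 * d + 1).+1 m.
Proof. by have := bonf_sum_rem (2 * d + 1) m; rewrite oddD oddM /= => <-; lia. Qed.

End Bonferroni_nat.

Local Open Scope classical_set_scope.

Lemma fsubset_card_exists (K : choiceType) (V : {fset K}) k : (k <= #|`V|)%N ->
  exists2 U : {fset K}, #|`U| = k & (U `<=` V)%fset.
Proof.
elim: k => [|k IH] kV; first by exists fset0; rewrite ?cardfs0 ?fsub0set.
have [U cU UV] := IH (ltnW kV).
have /fsubsetPn[x xV xU] : ~~ (V `<=` U)%fset.
  by apply/negP => /fsubset_leq_card; rewrite cU; lia.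
exists (x |` U)%fset; first by rewrite cardfsU1 xU cU.
by apply/fsubsetP => y; rewrite !inE => /orP[/eqP ->//|/(fsubsetP UV)].
Qed.

Section ereal_sums.
Local Open Scope ereal_scope.

Lemma sume_const {R : realDomainType} (I : Type) (s : seq I) (c : \bar R) :
  \sum_(i <- s) c = (size s)%:R%:E * c.
Proof.
elim: s => [|x s IH]; first by rewrite big_nil mul0e.
by rewrite big_cons IH /= -nat1r EFinD ge0_muleDl ?mul1e.
Qed.

Lemma sume_alternating {R : realDomainType} n (c : nat -> R) (f : nat -> \bar R) :
  (forall j, (j < n)%N -> f j \is a fin_num) ->
  \sum_(0 <= j < n) ((-1) ^+ j * c j)%:E * f j =
  \sum_(0 <= j < n | ~~ odd j) (c j)%:E * f j - \sum_(0 <= j < n | odd j) (c j)%:E * f j.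
Proof.
move=> f_fin; rewrite (bigID (fun j => odd j)) /= addeC; congr (_ + _).
  by apply: eq_bigr => j /negbTE j_even; rewrite -signr_odd j_even mul1r.
rewrite big_nat_cond [in RHS]big_nat_cond -fin_num_sumeN => [|j /andP[/andP[_ jn] _]].
  by apply: eq_bigr => j /andP[_ j_odd]; rewrite -signr_odd j_odd mulN1r EFinN mulNe.
by rewrite fin_numM // f_fin.
Qed.

End ereal_sums.

Section countable_esum.
Local Open Scope ereal_scope.
Context {R : realType} {I : countType}.
Implicit Types (Y : set I) (a : I -> \bar R).

Lemma esum_pickle Y a : (forall i, Y i -> 0 <= a i) ->
  esum Y a = \sum_(n <oo | n \in choice.pickle @` Y) oapp a 0 (choice.unpickle n).
Proof.
move=> a0; transitivity (esum Y (fun i => oapp a 0 (choice.unpickle (choice.pickle i)))).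
  by apply: eq_esum => i _; rewrite choice.pickleK.
rewrite -(esum_image Y choice.pickle (fun n => oapp a 0 (choice.unpickle n))); last first.
  by move=> i j _ _; exact: (pcan_inj (@choice.pickleK _)).
rewrite nneseries_esum ?set_mem_set // => n /set_mem[i Yi <-].
by rewrite choice.pickleK; exact: a0.
Qed.

Lemma esumZl Y a (x : R) : (0 <= x)%R -> (forall i, Y i -> 0 <= a i) ->
  esum Y (fun i => x%:E * a i) = x%:E * esum Y a.
Proof.
move=> x0 a0; rewrite !esum_pickle //; last by move=> i Yi; rewrite mule_ge0 ?a0.
rewrite -nneseriesZl; last by move=> n /set_mem[i Yi <-]; rewrite choice.pickleK a0.
by apply: eq_eseriesr => n _; case: choice.unpickle => [i|] /=; rewrite ?mule0.
Qed.

End countable_esum.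

Section countable_measure.
Local Open Scope ereal_scope.
Context {d : measure_display} {T : measurableType d} {R : realType}.
Context (mu : measure T R) {I : countType}.
Implicit Types (Y : set I) (E : I -> set T).

Lemma bigcup_pickle Y E :
  \bigcup_(i in Y) E i = \bigcup_(n in choice.pickle @` Y) oapp E set0 (choice.unpickle n).
Proof.
apply/seteqP; split => w.
  by move=> [i Yi Ei]; exists (choice.pickle i); [exists i|rewrite choice.pickleK].
by move=> [n [i Yi <-]]; rewrite choice.pickleK => Ei; exists i.
Qed.

Lemma bigcup_countable_measurable Y E : (forall i, Y i -> measurable (E i)) ->
  measurable (\bigcup_(i in Y) E i).
Proof.
move=> mE; rewrite bigcup_pickle; apply: bigcup_measurable => n [i Yi <-].
by rewrite choice.pickleK; exact: mE.
Qed.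

Lemma measure_bigcup_esum Y E : (forall i, Y i -> measurable (E i)) ->
  trivIset Y E -> mu (\bigcup_(i in Y) E i) = esum Y (fun i => mu (E i)).
Proof.
move=> mE tE; rewrite bigcup_pickle measure_bigcup.
- rewrite esum_pickle //; apply: eq_eseriesr => n _.
  by case: choice.unpickle => [i|] /=; rewrite ?measure0.
- by move=> n [i Yi <-]; rewrite choice.pickleK; exact: mE.
- move=> n m [i Yi <-] [j Yj <-]; rewrite !choice.pickleK => ij.
  by rewrite (tE i j Yi Yj ij).
Qed.

Lemma measure_bigcup_esum_le Y E : (forall i, Y i -> measurable (E i)) ->
  mu (\bigcup_(i in Y) E i) <= esum Y (fun i => mu (E i)).
Proof.
move=> mE; rewrite esum_pickle // bigcup_pickle.
pose F n := if n \in choice.pickle @` Y then oapp E set0 (choice.unpickle n) else set0.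
have mF n : measurable (F n).
  rewrite /F; case: ifPn => // /set_mem[i Yi <-]; rewrite choice.pickleK; exact: mE.
have -> : \bigcup_(n in choice.pickle @` Y) oapp E set0 (choice.unpickle n) = \bigcup_n F n.
  by rewrite bigcup_mkcond.
apply: le_trans (measure_sigma_subadditive _ _ _ _) _ => //; first exact: bigcupT_measurable.
rewrite [leRHS]eseries_mkcond; apply: lee_nneseries => [n _ _|n _] //; rewrite /F.
by case: (_ \in _); case: (choice.unpickle n : option I) => [i|] /=; rewrite ?measure0.
Qed.

End countable_measure.

Section esum_fsubset.
Local Open Scope ereal_scope.

Lemma esum_fsubset_card {R : realType} (K : choiceType) (V : {fset K}) k (c : \bar R) :
  0 <= c -> esum [set U : {fset K} | #|`U| = k /\ (U `<=` V)%fset] (fun=> c) =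
  ('C(#|`V|, k))%:R%:E * c.
Proof.
move=> c0; pose val_fset (S : {set V}) : {fset K} := [fset val x | x in S]%fset.
have val_fsetK S : fsub V (val_fset S) = S.
  by apply/setP => x; rewrite in_fsub /val_fset (mem_imfset _ _ val_inj).
have val_fset_sub S : (val_fset S `<=` V)%fset.
  by apply/fsubsetP => x /imfsetP [y _ ->]; exact: (valP y).
have -> : [set U : {fset K} | #|`U| = k /\ (U `<=` V)%fset] =
    val_fset @` [set S : {set V} | #|S| = k].
  apply/seteqP; split => U.
    move=> [cU UV]; exists (fsub V U); first by rewrite /= card_fsub.
    apply/fsetP => x; apply/imfsetP/idP => [[y]|xU]; first by rewrite in_fsub => yU ->.
    by exists [` (fsubsetP UV) x xU]%fset => //; rewrite in_fsub.
  move=> [S /= cS <-]; split => //.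
  by rewrite -(card_fsub (val_fset_sub S)) val_fsetK.
rewrite esum_image; last by move=> S1 S2 _ _ e; rewrite -(val_fsetK S1) e val_fsetK.
rewrite esum_fset //; last exact: finite_finset.
have -> : [set S : {set V} | #|S| = k] = [set` enum (finset (fun S : {set V} => #|S| == k))].
  by apply/seteqP; split => S /=; rewrite mem_enum inE => /eqP.
by rewrite -fsbig_seq ?enum_uniq // sume_const -cardE card_draws cardfE.
Qed.

End esum_fsubset.

Section incidence.
Context {Omega : Type} (A : nat -> set Omega).
Implicit Types (U V : {fset nat}) (w : Omega).

Lemma AUP U w : AU A U w <-> (forall i, i \in U -> A i w).
Proof. by split => [H i iU|H i iU]; apply: H. Qed.

Lemma BUP V w : BU A V w <-> (forall i, A i w <-> i \in V).
Proof.
rewrite /BU /Bempty; case: eqP => [->|V0].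
  split => [H i|H [i _ Ai]]; last by have := (H i).1 Ai; rewrite inE.
  by rewrite inE; split => // Ai; case: H; exists i.
split => [[AV notAU] i|H].
  split => [Ai|]; last exact: AV.
  apply/negPn/negP => iV; apply: notAU; exists i => // j.
  by rewrite /= !inE => /orP[/AV//|/eqP ->].
split => [i iV|[i /= /negP iV Ai]]; first exact/H.
by apply: iV; apply/H; apply: Ai; rewrite /= !inE eqxx orbT.
Qed.

Lemma BinfP w : Binf A w <-> (forall n, exists2 j, (n <= j)%N & A j w).
Proof.
split => [H n|H n _]; first by have [j /= nj Aj] := H n I; exists j.
by have [j nj Aj] := H n; exists j.
Qed.

Lemma notBinf_finite w : ~ Binf A w -> finite_set [set i | A i w].
Proof.
move=> notB; have /existsNP[n notfar] : ~ forall n, exists2 j, (n <= j)%N & A j w.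
  by move/BinfP.
apply: (@sub_finite_set _ _ `I_n); last exact: finite_II.
by move=> i Ai /=; rewrite ltnNge; apply/negP => ni; apply: notfar; exists i.
Qed.

Definition hits w : {fset nat} := fset_set [set i | A i w].

Lemma BU_hits w : ~ Binf A w -> BU A (hits w) w.
Proof.
by move/notBinf_finite => fin; apply/BUP => i; rewrite in_fset_set // inE.
Qed.

Lemma hitsP w i : ~ Binf A w -> A i w <-> i \in hits w.
Proof. by move=> /BU_hits /BUP. Qed.

Lemma BU_notBinf V w : BU A V w -> ~ Binf A w.
Proof.
move/BUP => HV /BinfP /(_ (\max_(i <- V) i).+1) [j jV Aj].
have := @leq_bigmax_seq _ (enum_fset V) xpredT id j ((HV j).1 Aj) isT.
by move: jV => /=; lia.
Qed.

Lemma BU_uniq U V w : BU A U w -> BU A V w -> U = V.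
Proof.
move=> /BUP HU /BUP HV; apply/fsetP => i.
by apply/idP/idP => [/(HU i).2/(HV i).1|/(HV i).2/(HU i).1].
Qed.

Lemma trivIset_BU (Y : set {fset nat}) : trivIset Y (BU A).
Proof. by move=> U V _ _ [w [HU HV]]; exact: BU_uniq HU HV. Qed.

Lemma trivIset_Bfam : trivIset [set: option {fset nat}] (Bfam A).
Proof.
move=> [U|] [V|] _ _ [w [/= Hw1 Hw2]] //.
- by rewrite (BU_uniq Hw1 Hw2).
- by case: (BU_notBinf Hw1 Hw2).
- by case: (BU_notBinf Hw2 Hw1).
Qed.

Lemma bigcup_Bfam : \bigcup_o Bfam A o = [set: Omega].
Proof.
apply/seteqP; split => // w _.
have [B|notB] := pselect (Binf A w); first by exists None.
by exists (Some (hits w)) => //; exact: BU_hits.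
Qed.

Lemma bigcup_A : \bigcup_i A i = Binf A `|` \bigcup_(U in [set U | U != fset0]) BU A U.
Proof.
apply/seteqP; split => w.
  move=> [i _ Ai]; have [B|notB] := pselect (Binf A w); [by left|right].
  exists (hits w); last exact: BU_hits.
  by apply/fset0Pn; exists i; apply/hitsP.
move=> [/BinfP /(_ 0%N) [j _ Aj]|[U /= /fset0Pn [i iU] /BUP HU]]; first by exists j.
by exists i => //; apply/HU.
Qed.

Lemma bigcup_BU : \bigcup_(V in [set: {fset nat}]) BU A V = ~` Binf A.
Proof.
apply/seteqP; split => w; first by move=> [V _ /BU_notBinf].
by move=> notB; exists (hits w) => //; exact: BU_hits.
Qed.

Lemma AU_Binf_BU U :
  AU A U = (AU A U `&` Binf A) `|` \bigcup_(V in [set V | (U `<=` V)%fset]) BU A V.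
Proof.
apply/seteqP; split => w.
  move=> AUw; have [B|notB] := pselect (Binf A w); [by left|right].
  exists (hits w); last exact: BU_hits.
  by apply/fsubsetP => i iU; apply/hitsP => //; exact: AUw.
move=> [[]//|[V /= UV /BUP HV]] i iU; apply/HV; exact: (fsubsetP UV).
Qed.

Lemma Binf_far_AU w M k : Binf A w -> exists U,
  [/\ #|`U| = k, forall i, i \in U -> (M <= i)%N & AU A U w].
Proof.
move=> /BinfP B; elim: k => [|k [U [cU UM AUw]]].
  by exists fset0; split => [|i|i]; rewrite ?cardfs0 ?inE.
have [j jM Aj] := B (maxn M (\max_(i <- U) i).+1).
have jU : j \notin U.
  apply/negP => jU; have := @leq_bigmax_seq _ (enum_fset U) xpredT id j jU isT.
  by move: jM; rewrite geq_max => /andP[_] /=; lia.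
exists (j |` U)%fset; split; first by rewrite cardfsU1 jU cU.
- by move=> i; rewrite !inE => /orP[/eqP ->|/UM//]; move: jM; rewrite geq_max => /andP[].
- by apply/AUP => i; rewrite !inE => /orP[/eqP ->//|iU]; exact: AUw.
Qed.

Lemma bigcup_AU_card k : \bigcup_(U in [set U | #|`U| = k]) AU A U =
  Binf A `|` \bigcup_(V in [set V | (k <= #|`V|)%N]) BU A V.
Proof.
apply/seteqP; split => w.
  move=> [U /= <- AUw]; have [B|notB] := pselect (Binf A w); [by left|right].
  exists (hits w); last exact: BU_hits.
  by apply/fsubset_leq_card/fsubsetP => i iU; apply/hitsP => //; exact: AUw.
move=> [/(Binf_far_AU 0 k)[U [cU _ AUw]]|[V /= kV /BUP HV]]; first by exists U.
have [U cU UV] := fsubset_card_exists kV.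
by exists U => // i iU; apply/HV; exact: (fsubsetP UV).
Qed.

Lemma Binf_sub_bigcup_AU (F : set {fset nat}) k :
  finite_set F -> (0 < k)%N ->
  Binf A `<=` \bigcup_(U in [set U | #|`U| = k] `\` F) AU A U.
Proof.
move=> finF k_gt0 w /(Binf_far_AU (\max_(U <- fset_set F) \max_(i <- U) i).+1 k).
move=> [U [cU UM AUw]]; exists U => //; split => //= FU.
have /fset0Pn[i iU] : U != fset0 by rewrite -cardfs_gt0 cU.
have i_max := @leq_bigmax_seq _ (enum_fset U) xpredT id i iU isT.
have UF : U \in fset_set F by rewrite in_fset_set // inE.
have U_max := @leq_bigmax_seq _ (enum_fset (fset_set F)) xpredT
  (fun U : {fset nat} => \max_(i <- U) i) U UF isT.
by have := UM i iU; move: i_max U_max => /=; lia.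
Qed.

End incidence.

Section measurable_incidence.
Context {d : measure_display} {T : measurableType d} (A : nat -> set T).
Hypothesis mA : forall i, measurable (A i).

Lemma measurable_AU U : measurable (AU A U).
Proof. by apply: bigcap_measurableType => i _; exact: mA. Qed.

Lemma measurable_Binf : measurable (Binf A).
Proof.
by apply: bigcap_measurableType => i _; apply: bigcup_measurable => j _; exact: mA.
Qed.

Lemma measurable_BU V : measurable (BU A V).
Proof.
rewrite /BU; case: ifP => _.
  by apply: measurableC; apply: bigcup_measurable => i _; exact: mA.
apply: measurableD; first exact: measurable_AU.
by apply: bigcup_measurable => i _; exact: measurable_AU.
Qed.

End measurable_incidence.

Section measure_incidence.
Local Open Scope ereal_scope.
Context {d : measure_display} {T : measurableType d} {R : realType}.
Context (mu : measure T R) (A : nat -> set T).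
Hypothesis mA : forall i, measurable (A i).

Let mBU := measurable_BU mA.

Lemma measure_AU U : mu (AU A U) =
  mu (AU A U `&` Binf A) + esum [set V | (U `<=` V)%fset] (fun V => mu (BU A V)).
Proof.
rewrite {1}AU_Binf_BU measureU.
- by congr (_ + _); apply: measure_bigcup_esum => // *; exact: trivIset_BU.
- by apply: measurableI; [exact: measurable_AU|exact: measurable_Binf].
- exact: bigcup_countable_measurable.
by apply/seteqP; split => // w [[_ B] [V _ HV]]; exact: BU_notBinf HV B.
Qed.

End measure_incidence.

Lemma probability_fin {d : measure_display} {T : measurableType d} {R : realType}
    (P : probability T R) (X : set T) :
  measurable X -> exists2 r : R, (0 <= r <= 1)%R & P X = r%:E.
Proof.
move=> mX; have PX_fin : P X \is a fin_num by rewrite fin_num_measure.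
exists (fine (P X)); last by rewrite fineK.
by rewrite -!lee_fin fineK // measure_ge0 probability_le1.
Qed.

Section probability_incidence.
Local Open Scope ereal_scope.
Context {d : measure_display} {T : measurableType d} {R : realType}.
Context (P : probability T R) (A : nat -> set T).
Hypothesis mA : forall i, measurable (A i).

Let mAU := measurable_AU mA.
Let mBU := measurable_BU mA.
Let mBinf := measurable_Binf mA.

Lemma Tsum_ge0 m : 0 <= Tsum P A m.
Proof. exact: esum_ge0. Qed.

Lemma Ssum_ge0 k : 0 <= Ssum P A k.
Proof. exact: esum_ge0. Qed.

Definition Tseries (u : nat -> nat) := \sum_(m <oo) (u m)%:R%:E * Tsum P A m.

Let Tseries_term_ge0 (u : nat -> nat) m : 0 <= (u m)%:R%:E * Tsum P A m.
Proof. by rewrite mule_ge0 ?lee_fin ?Tsum_ge0. Qed.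

Lemma TseriesD (u v : nat -> nat) : Tseries (fun m => (u m + v m)%N) = Tseries u + Tseries v.
Proof.
rewrite /Tseries -nneseriesD //; apply: eq_eseriesr => m _.
by rewrite natrD EFinD ge0_muleDl ?lee_fin.
Qed.

Lemma TseriesZ c (u : nat -> nat) : Tseries (fun m => (c * u m)%N) = c%:R%:E * Tseries u.
Proof.
rewrite /Tseries -nneseriesZl //; apply: eq_eseriesr => m _.
by rewrite natrM EFinM muleA.
Qed.

Lemma le_Tseries (u v : nat -> nat) : (forall m, (u m <= v m)%N) -> Tseries u <= Tseries v.
Proof.
move=> uv; apply: lee_nneseries => // m _; apply: lee_wpmul2r; first exact: Tsum_ge0.
by rewrite lee_fin ler_nat.
Qed.

Lemma esum_BU_card (u : nat -> nat) :
  esum [set: {fset nat}] (fun V => (u #|`V|)%:R%:E * P (BU A V)) = Tseries u.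
Proof.
have -> : [set: {fset nat}] = \bigcup_m [set V : {fset nat} | #|`V| = m].
  by apply/seteqP; split => // V _; exists #|`V|.
rewrite esum_bigcupT; last 2 first.
- by move=> m n _ _ [V [/= <- <-]].
- by move=> V; rewrite mule_ge0 ?lee_fin.
rewrite /Tseries nneseries_esumT //; apply: eq_esum => m _; rewrite -esumZl //.
by apply: eq_esum => V /= ->.
Qed.

Lemma Tseries1 : Tseries (fun=> 1%N) = \sum_(0 <= j <oo) Tsum P A j.
Proof. by apply: eq_eseriesr => m _; rewrite mul1e. Qed.

Lemma Tsum_series : \sum_(0 <= j <oo) Tsum P A j = 1 - P (Binf A).
Proof.
rewrite -probability_setC // -bigcup_BU measure_bigcup_esum //; last exact: trivIset_BU.
rewrite -Tseries1 -esum_BU_card; apply: eq_esum => V _; by rewrite mul1e.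
Qed.

Lemma Tsum_series_le1 : \sum_(0 <= j <oo) Tsum P A j <= 1.
Proof.
rewrite Tsum_series; have [p /andP[p0 _] ->] := probability_fin P mBinf.
by rewrite -EFinB lee_fin lerBlDr lerDl.
Qed.

Lemma Tsum_series_eq1 : \sum_(0 <= j <oo) Tsum P A j = 1 <-> P (Binf A) = 0.
Proof.
rewrite Tsum_series; have [p _ ->] := probability_fin P mBinf.
rewrite -EFinB; split => [[] /eqP|[->]]; rewrite ?subr0 //.
by rewrite subr_eq addrC -subr_eq subrr => /eqP <-.
Qed.

Lemma Ssum_BU k : P (Binf A) = 0 ->
  Ssum P A k = esum [set: {fset nat}] (fun V => ('C(#|`V|, k))%:R%:E * P (BU A V)).
Proof.
move=> PBinf0; transitivity (esum [set U : {fset nat} | #|`U| = k]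
   (fun U => esum [set V | (U `<=` V)%fset] (fun V => P (BU A V)))).
  apply: eq_esum => U _; rewrite measure_AU // -[RHS]add0e; congr (_ + _).
  by apply/eqP; rewrite eq_le measure_ge0 andbT -PBinf0 measureIr.
rewrite esum_esum //; rewrite (reindex_esum ([set: {fset nat}] `*`` (fun V =>
    [set U : {fset nat} | #|`U| = k /\ (U `<=` V)%fset])) _ (fun p => (p.2, p.1))).
  rewrite /= -(esum_esum (I := [set: {fset nat}]) (a := fun V U => P (BU A V))) //.
  by apply: eq_esum => V _; rewrite esum_fsubset_card.
split.
- by move=> [V U] [_ /= [cU UV]].
- by move=> [V1 U1] [V2 U2] _ _ /= [-> ->].
- by move=> [U V] [/= cU UV]; exists (V, U).
Qed.

Lemma Ssum_Tseries k : P (Binf A) = 0 -> Ssum P A k = Tseries (fun m => 'C(m, k)).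
Proof. by move=> PBinf0; rewrite Ssum_BU // (esum_BU_card (fun m => 'C(m, k))). Qed.

Lemma Ssum_Tsum_shift k : P (Binf A) = 0 ->
  Ssum P A k = \sum_(0 <= j <oo) ('C(j + k, k))%:R%:E * Tsum P A (j + k).
Proof.
move=> PBinf0; rewrite Ssum_Tseries // /Tseries.
have term_ge0 m : 0 <= 'C(m, k)%:R%:E * Tsum P A m.
  exact: (Tseries_term_ge0 (fun m => 'C(m, k))).
rewrite (nneseries_addn _ (f := fun m => 'C(m, k)%:R%:E * Tsum P A m)) //.
rewrite (nneseries_split 0 k) // big_nat_cond big1 ?add0e // => i /andP[/andP[_ ik] _].
by rewrite bin_small ?mul0e.
Qed.

Lemma Ssum_ge_fsum_Binf k (F : set {fset nat}) : (0 < k)%N -> finite_set F ->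
  F `<=` [set U | #|`U| = k] -> \sum_(U \in F) P (AU A U) + P (Binf A) <= Ssum P A k.
Proof.
move=> k_gt0 finF FX; rewrite /Ssum (esumID F) //; apply: leeD.
  by rewrite esum_fset ?setIidr //; exact: finite_setIr.
apply: le_trans _ (measure_bigcup_esum_le P (fun U _ => mAU U)).
apply: le_measure; rewrite ?inE //; last exact: Binf_sub_bigcup_AU.
exact: bigcup_countable_measurable.
Qed.

Lemma Ssum_fin_Binf0 k : (0 < k)%N -> Ssum P A k < +oo -> P (Binf A) = 0.
Proof.
move=> k_gt0 Sk_fin.
have [s Sk] : exists s : R, Ssum P A k = s%:E.
  by exists (fine (Ssum P A k)); rewrite fineK // ge0_fin_numE ?Ssum_ge0.
have [p /andP[p0 _] PBinf] := probability_fin P mBinf.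
have : Ssum P A k <= Ssum P A k - P (Binf A).
  rewrite {1}/Ssum /esum; apply: ge_ereal_sup => _ [F [finF FX] <-].
  by rewrite leeBrDr ?Ssum_ge_fsum_Binf // PBinf.
rewrite Sk PBinf -EFinB lee_fin => le_sp.
by apply/eqP; rewrite eqe; apply/eqP; lra.
Qed.

Lemma Ssum_fin_le k l : (0 < l)%N -> Ssum P A l < +oo -> (k <= l)%N ->
  Ssum P A k < +oo.
Proof.
move=> l_gt0 Sl_fin kl; have PBinf0 := Ssum_fin_Binf0 l_gt0 Sl_fin.
have [s Sl] : exists s : R, Ssum P A l = s%:E.
  by exists (fine (Ssum P A l)); rewrite fineK // ge0_fin_numE ?Ssum_ge0.
rewrite Ssum_Tseries //; apply: le_lt_trans (le_Tseries (fun m => leq_bin_mul m kl)) _.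
rewrite TseriesZ TseriesD -Ssum_Tseries // Tseries1 Tsum_series PBinf0 Sl.
by rewrite -EFinB -EFinD -EFinM ltry.
Qed.

End probability_incidence.

Section bonferroni.
Local Open Scope ereal_scope.
Context {d : measure_display} {T : measurableType d} {R : realType}.
Context (P : probability T R) (A : nat -> set T).
Hypothesis mA : forall i, measurable (A i).
Hypothesis PBinf0 : P (Binf A) = 0.

Let mBU := measurable_BU mA.

Lemma measure_bigcup_AU_card k :
  P (\bigcup_(U in [set U | #|`U| = k]) AU A U) = Tseries P A (fun m => k <= m : nat).
Proof.
have mW : measurable (\bigcup_(V in [set V | (k <= #|`V|)%N]) BU A V).
  by apply: (@bigcup_countable_measurable _ _ {fset nat}) => V _; exact: mBU.
rewrite bigcup_AU_card setUC measureU0 //; last exact: measurable_Binf.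
rewrite (measure_bigcup_esum P (I := {fset nat})) //; last exact: trivIset_BU.
rewrite -esum_BU_card // esum_mkcond; apply: eq_esum => V _.
have [kV|Vk] := leqP k #|`V|; first by rewrite mem_set ?mul1e.
by rewrite memNset ?mul0e //= => kV; move: Vk; rewrite ltnNge kV.
Qed.

Lemma bonf_sum_Ssum k Q n :
  \sum_(0 <= j < n | Q j) (bonf_coef k j)%:R%:E * Ssum P A (j + k) =
  Tseries P A (bonf_sum k Q n).
Proof.
transitivity (\sum_(0 <= j < n | Q j) \sum_(m <oo)
    (bonf_coef k j)%:R%:E * ('C(m, j + k)%:R%:E * Tsum P A m)).
  apply: eq_bigr => j _; rewrite Ssum_Tseries // -nneseriesZl // => m _.
  by rewrite mule_ge0 ?lee_fin ?Tsum_ge0.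
rewrite -nneseries_sum => [|j m _]; last by rewrite !mule_ge0 ?lee_fin ?Tsum_ge0.
apply: eq_eseriesr => m _.
rewrite /bonf_sum natr_sum -sumEFin ge0_sume_distrl => [|j _]; last by rewrite lee_fin.
by apply: eq_bigr => j _; rewrite muleA -EFinM natrM.
Qed.

Definition bonferroni_sum k n :=
  \sum_(0 <= j < n) (((-1) ^+ j * 'C(j + k - 1, k - 1)%:R)%:E * Ssum P A (j + k)).

Section partial_sums.
Variables k n : nat.
Hypothesis S_fin : forall j, (j < n)%N -> Ssum P A (j + k) \is a fin_num.

Lemma Tseries_bonf_sum_fin Q : Tseries P A (bonf_sum k Q n) \is a fin_num.
Proof.
rewrite -bonf_sum_Ssum; apply/sum_fin_numP => j /[!mem_index_iota] /andP[_ jn] _.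
by rewrite fin_numM ?S_fin.
Qed.

Lemma bonferroni_sumE :
  bonferroni_sum k n = Tseries P A (bonf_sum k (predC odd) n) - Tseries P A (bonf_sum k odd n).
Proof. by rewrite /bonferroni_sum sume_alternating // !bonf_sum_Ssum. Qed.

End partial_sums.

Lemma bonferroni_upper k r : (0 < k)%N ->
  (forall j, (j < (2 * r).+1)%N -> Ssum P A (j + k) \is a fin_num) ->
  P (\bigcup_(U in [set U | #|`U| = k]) AU A U) <= bonferroni_sum k (2 * r).+1.
Proof.
move=> k_gt0 S_fin; rewrite bonferroni_sumE // leeBrDr ?Tseries_bonf_sum_fin //.
rewrite measure_bigcup_AU_card -TseriesD; apply: le_Tseries => m.
exact: bonferroni_nat_upper.
Qed.

Lemma bonferroni_lower k r : (0 < k)%N ->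
  (forall j, (j < (2 * r + 1).+1)%N -> Ssum P A (j + k) \is a fin_num) ->
  bonferroni_sum k (2 * r + 1).+1 <= P (\bigcup_(U in [set U | #|`U| = k]) AU A U).
Proof.
move=> k_gt0 S_fin; rewrite bonferroni_sumE // leeBlDr ?Tseries_bonf_sum_fin //.
rewrite measure_bigcup_AU_card -TseriesD; apply: le_Tseries => m.
exact: bonferroni_nat_lower.
Qed.

End bonferroni.

Local Open Scope ereal_scope.

Theorem proposition3p2 :
  (forall (Omega : Type) (A : nat -> set Omega),
     infinite_set [set: Omega] ->
     (* (1) *)
     (countable [set: option {fset nat}] /\
      trivIset [set: option {fset nat}] (Bfam A) /\
      \bigcup_o Bfam A o = [set: Omega]) /\
     (* (2) *)
     (\bigcup_i A i = Binf A `|` \bigcup_(U in [set U : {fset nat} | U != fset0]) BU A U) /\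
     (* (3) *)
     (forall U : {fset nat}, U != fset0 -> AU A U = AU' A U `|` (AU A U `&` Binf A)))
  /\
  (forall (d : measure_display) (T : measurableType d) (R : realType)
          (P : probability T R) (A : nat -> set T),
     infinite_set [set: T] ->
     (forall i, measurable (A i)) ->
     (* (4) *)
     ((exists k, (0 < k)%N /\ Ssum P A k < +oo) -> P (Binf A) = 0) /\
     (* (5) *)
     (\sum_(0 <= j <oo) Tsum P A j <= 1 /\
      (\sum_(0 <= j <oo) Tsum P A j = 1 <-> P (Binf A) = 0)) /\
     (* (6) *)
     (P (Binf A) = 0 -> forall k, (0 < k)%N ->
        Ssum P A k = \sum_(0 <= j <oo) (('C(j + k, k))%:R)%:E * Tsum P A (j + k)) /\
     (* (7) *)
     (forall l, (0 < l)%N -> Ssum P A l < +oo ->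
        (forall k, (0 < k)%N -> (k < l)%N -> Ssum P A k < +oo) /\
        (forall (dd r k : nat), (0 < k)%N ->
           (1 <= 2 * dd + k + 1 <= l)%N -> (1 <= 2 * r + k <= l)%N ->
           \sum_(0 <= j < (2 * dd + 1).+1)
               (((-1) ^+ j * ('C(j + k - 1, k - 1))%:R)%:E * Ssum P A (j + k))
             <= P (\bigcup_(U in [set U : {fset nat} | #|` U| = k]) AU A U)
           /\
           P (\bigcup_(U in [set U : {fset nat} | #|` U| = k]) AU A U)
             <= \sum_(0 <= j < (2 * r).+1)
               (((-1) ^+ j * ('C(j + k - 1, k - 1))%:R)%:E * Ssum P A (j + k))))).
Proof.
split=> [Om A _|d T R P A _ mA].
  split; first by split; [exact: countableP|split; [exact: trivIset_Bfam|exact: bigcup_Bfam]].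
  by split; [exact: bigcup_A|move=> U _; rewrite /AU' setUC setUIDK].
split; first by move=> [k [k_gt0 Sk]]; exact: Ssum_fin_Binf0 k_gt0 Sk.
split; first by split; [exact: Tsum_series_le1|exact: Tsum_series_eq1].
split; first by move=> PBinf0 k _; exact: Ssum_Tsum_shift.
move=> l l_gt0 Sl; have PBinf0 := Ssum_fin_Binf0 mA l_gt0 Sl.
split=> [k _ /ltnW|dd r k k_gt0 /andP[_ dl] /andP[_ rl]]; first exact: Ssum_fin_le.
have S_fin j : (j + k <= l)%N -> Ssum P A (j + k) \is a fin_num.
  by move=> jkl; rewrite ge0_fin_numE ?Ssum_ge0 // (Ssum_fin_le mA l_gt0 Sl jkl).
by split; [apply: bonferroni_lower|apply: bonferroni_upper] => // j jr; apply: S_fin; lia.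
Qed.
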